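(* Let $n\in\mathbb{N}$ and $f\colon\{-1,1\}^n\to[-1,1]$ with $f(1,\dots,1)=1$ and $f(-1,\dots,-1)=-1$. Let $\rho$ be the distribution of $p=\frac{e^t-1}{e^t+1}$ where $t$ is uniform on $[-\ln(5n),\ln(5n)]$. Then $$\mathbb{E}_{p\sim\rho,\ x_{1\ldots n}\sim p}\left[f(x)\cdot\sum_{i=1}^n(x_i-p)\right]\ge\frac{1}{\ln(5n)}.$$
   Context: For $p\in[-1,1]$, $x_{1\ldots n}\sim p$ means $x=(x_1,\dots,x_n)$ where the $x_i\in\{-1,1\}$ are independent with $\mathbb{E}[x_i]=p$, i.e. $\Pr[x_i=1]=\frac{1+p}{2}$. *)

From HB Require Import structures.
From mathcomp Require Import all_boot all_order all_algebra.
From mathcomp Require Import all_classical all_reals all_analysis.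
Set Implicit Arguments. Unset Strict Implicit. Unset Printing Implicit Defensive.
Import Order.TTheory GRing.Theory Num.Theory.
Local Open Scope ring_scope.

(* A point of {-1,1}^n is encoded as x : {ffun 'I_n -> bool};
   its i-th coordinate is sgnb (x i) ∈ {-1,1} (true ↦ 1, false ↦ -1). *)
Definition sgnb {R : pzRingType} (b : bool) : R := if b then 1 else -1.

Definition hcube (n : nat) := {ffun 'I_n -> bool}.

(* Pr[x] when x_{1..n} ~ p : independent coordinates with Pr[x_i = 1] = (1+p)/2 *)
Definition bprob {R : realType} (n : nat) (p : R) (x : hcube n) : R :=
  \prod_(i < n) ((1 + p * sgnb (x i)) / 2).

Definition inner_exp {R : realType} (n : nat) (f : hcube n -> R) (p : R) : R :=
  \sum_(x : hcube n) bprob p x * (f x * \sum_(i < n) (sgnb (x i) - p)).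

Definition p_of_t {R : realType} (t : R) : R := (expR t - 1) / (expR t + 1).

(* E_{p ~ rho}[ g p ] where rho is the law of p_of_t t, t uniform on [-L, L]:
   the normalised Lebesgue integral over [-L, L]. *)
Definition rho_exp {R : realType} (L : R) (g : R -> R) : \bar R :=
  ((2 * L)^-1)%:E * (\int[lebesgue_measure]_(t in `[(- L)%R, L]%classic) (g (p_of_t t))%:E)%E.

(* The substitution p = p_of_t t satisfies dp/dt = (1 - p^2)/2, so every factor
   (1 + p x_i)/2 of the density of x ~ p has logarithmic t-derivative (x_i - p)/2.
   Hence the integrand E_{x ~ p}[f(x) sum_i (x_i - p)] is the t-derivative of
   2 E_{x ~ p}[f], and averaging it over [-L, L] gives (E_{p(L)}[f] - E_{p(-L)}[f]) / L.
   For L = ln (5n) the all-ones point has mass (5n/(5n+1))^n >= 3/4 under p(L), and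
   likewise the all-minus-ones point under p(-L) = -p(L), by Bernoulli's inequality;
   since |f| <= 1 this forces E_{p(L)}[f] >= 1/2 and E_{p(-L)}[f] <= -1/2. *)

From HB Require Import structures.
From mathcomp Require Import all_boot all_order all_algebra.
From mathcomp Require Import all_classical all_reals all_analysis.
From mathcomp Require Import ring lra.
Set Implicit Arguments. Unset Strict Implicit. Unset Printing Implicit Defensive.
Import Order.TTheory GRing.Theory Num.Theory numFieldNormedType.Exports.
Local Open Scope ring_scope.

Section BiasedCube.
Variable R : realType.

Lemma bernoulli_ineq (x : R) (n : nat) : -1 <= x -> 1 + n%:R * x <= (1 + x) ^+ n.
Proof.
move=> x_ge; elim: n => [|n IH]; first by rewrite mul0r addr0 expr0.
have x1_ge0 : 0 <= 1 + x by lra.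
rewrite exprS -natr1; apply: le_trans (ler_wpM2l x1_ge0 IH).
have : 0 <= n%:R * x ^+ 2 :> R by rewrite mulr_ge0 ?sqr_ge0.
rewrite expr2; lra.
Qed.

Lemma wsum_ge_atom (T : finType) (w g : T -> R) (y : T) :
  (forall z, 0 <= w z) -> \sum_z w z = 1 -> (forall z, -1 <= g z) -> g y = 1 ->
  2 * w y - 1 <= \sum_z w z * g z.
Proof.
move=> w_ge0 w_sum1 g_ge gy1; rewrite (bigD1 y) //= gy1 mulr1.
rewrite (bigD1 y) //= in w_sum1.
have : - \sum_(z | z != y) w z <= \sum_(z | z != y) w z * g z.
  by rewrite -sumrN; apply: ler_sum => z _; have := w_ge0 z; have := g_ge z; nra.
lra.
Qed.

Lemma is_derive_sum_seq (I : Type) (r : seq I) (h : I -> R -> R) (dh : I -> R) (t : R) :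
  (forall i, is_derive t 1 (h i) (dh i)) ->
  is_derive t 1 (fun s => \sum_(i <- r) h i s) (\sum_(i <- r) dh i).
Proof.
move=> dh_i; elim: r => [|i r IH].
  by under [fun s => _]funext do rewrite big_nil; rewrite big_nil; apply: is_derive_cst.
under [fun s => _]funext do rewrite big_cons; rewrite big_cons.
exact: is_deriveD (dh_i i) IH.
Qed.

Lemma is_derive_prod_seq (I : Type) (r : seq I) (h : I -> R -> R) (a : I -> R) (t : R) :
  (forall i, is_derive t 1 (h i) (h i t * a i)) ->
  is_derive t 1 (fun s => \prod_(i <- r) h i s)
    ((\prod_(i <- r) h i t) * \sum_(i <- r) a i).
Proof.
move=> dh; elim: r => [|i r IH].
  under [fun s => _]funext do rewrite big_nil.
  by rewrite !big_nil mulr0; apply: is_derive_cst.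
under [fun s => _]funext do rewrite big_cons.
apply: (is_derive_eq (is_deriveM (dh i) IH)).
by rewrite !big_cons /GRing.scale /=; ring.
Qed.

Lemma integral_is_derive (F f : R -> R) (a b : R) : a < b ->
  (forall t : R, is_derive t 1 F (f t)) -> continuous f ->
  (\int[lebesgue_measure]_(t in `[a, b]%classic) (f t)%:E = (F b - F a)%:E)%E.
Proof.
move=> ab dF cf; have F_der (t : R) : derivable F t 1 by case: (dF t).
have F_cont (t : R) : {for t, continuous F}.
  exact/differentiable_continuous/derivable1_diffP.
rewrite EFinB; apply: continuous_FTC2 => //.
- exact: continuous_subspaceT.
- split; first by move=> t _.
  + exact/cvg_at_right_filter/F_cont.
  + exact/cvg_at_left_filter/F_cont.
- by move=> t _; rewrite derive1E; case: (dF t).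
Qed.

Lemma p_of_tN (t : R) : p_of_t (- t) = - p_of_t t.
Proof.
have e_gt0 := expR_gt0 t.
rewrite /p_of_t expRN; field; rewrite ?gt_eqF //; lra.
Qed.

Lemma p_of_t_itv (t : R) : -1 <= p_of_t t <= 1.
Proof.
have e_gt0 := expR_gt0 t.
by rewrite /p_of_t ler_pdivlMr ?ler_pdivrMr; first (apply/andP; split); lra.
Qed.

Lemma p_of_t_ln (N : R) : 0 < N -> (1 + p_of_t (ln N)) / 2 = N / (N + 1).
Proof.
move=> N_gt0; rewrite /p_of_t lnK ?posrE //; field; rewrite gt_eqF //; lra.
Qed.

Lemma is_derive_p_of_t (t : R) :
  is_derive t 1 (@p_of_t R) ((1 - p_of_t t ^+ 2) / 2).
Proof.
have e1_neq0 : expR t + 1 != 0 by rewrite gt_eqF // addr_gt0 ?expR_gt0.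
have d_num : is_derive t 1 (expR - cst 1 : R -> R) (expR t).
  exact: is_derive_eq (is_deriveB (is_derive_expR t) (is_derive_cst (1 : R) t 1)) (subr0 _).
have d_den : is_derive t 1 (expR + cst 1 : R -> R) (expR t).
  exact: is_derive_eq (is_deriveD (is_derive_expR t) (is_derive_cst (1 : R) t 1)) (addr0 _).
have -> : @p_of_t R = (expR - cst 1) * (fun s => ((expR + cst 1) s)^-1) by [].
apply: (is_derive_eq (is_deriveM d_num (@is_deriveV _ (expR + cst 1) _ _ _ e1_neq0 d_den))).
rewrite /GRing.scale /= !fctE; field; exact: e1_neq0.
Qed.

Lemma bprob_ge0 n (p : R) (x : hcube n) : -1 <= p <= 1 -> 0 <= bprob p x.
Proof.
by move=> /andP[? ?]; apply: prodr_ge0 => i _; case: (x i); rewrite /sgnb; lra.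
Qed.

Lemma bprob_sum1 n (p : R) : \sum_(x : hcube n) bprob p x = 1.
Proof.
rewrite /bprob -(bigA_distr_bigA (fun i (b : bool) => (1 + p * sgnb b) / 2)) /=.
rewrite -[RHS](expr1n _ n) -[in RHS](card_ord n) -prodr_const.
by apply: eq_bigr => i _; rewrite big_bool /sgnb /=; field.
Qed.

Lemma bprob_cst n (p : R) (b : bool) :
  bprob p ([ffun => b] : hcube n) = ((1 + p * sgnb b) / 2) ^+ n.
Proof.
rewrite /bprob (eq_bigr (fun=> (1 + p * sgnb b) / 2)) ?prodr_const ?card_ord //.
by move=> i _; rewrite ffunE.
Qed.

Definition bern_exp n (p : R) (g : hcube n -> R) := \sum_(x : hcube n) bprob p x * g x.

Lemma bern_exp_ge_atom n (p : R) (g : hcube n -> R) (y : hcube n) :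
  -1 <= p <= 1 -> (forall x, -1 <= g x) -> g y = 1 ->
  2 * bprob p y - 1 <= bern_exp p g.
Proof.
by move=> p_itv; apply: wsum_ge_atom; [move=> x; apply: bprob_ge0 | apply: bprob_sum1].
Qed.

Lemma bern_exp_le_atom n (p : R) (g : hcube n -> R) (y : hcube n) :
  -1 <= p <= 1 -> (forall x, g x <= 1) -> g y = -1 ->
  bern_exp p g <= 1 - 2 * bprob p y.
Proof.
move=> p_itv g_le gy; have := @bern_exp_ge_atom n p (fun x => - g x) y p_itv.
rewrite /bern_exp gy opprK => /(_ _ erefl); under eq_bigr do rewrite mulrN.
by rewrite sumrN lerNr opprB; apply=> x; rewrite lerNl opprK.
Qed.

Lemma is_derive_bprob_factor (b : bool) (t : R) :
  is_derive t 1 (fun s => (1 + p_of_t s * sgnb b) / 2)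
    ((1 + p_of_t t * sgnb b) / 2 * ((sgnb b - p_of_t t) / 2)).
Proof.
have -> : (fun s => (1 + p_of_t s * sgnb b) / 2) =
    cst (2^-1) + (2^-1 * sgnb b) *: @p_of_t R.
  by apply/funext => s; rewrite !fctE /GRing.scale /=; field.
apply: (is_derive_eq (is_deriveD (is_derive_cst _ t 1) (is_deriveZ _ (is_derive_p_of_t t)))).
(* (1 + p s) (s - p) = s (1 - p^2) because s^2 = 1 *)
by rewrite /GRing.scale /=; case: b; rewrite /sgnb /=; field.
Qed.

Lemma is_derive_bprob n (x : hcube n) (t : R) :
  is_derive t 1 (fun s => bprob (p_of_t s) x)
    (bprob (p_of_t t) x * \sum_(i < n) (sgnb (x i) - p_of_t t) / 2).
Proof. exact: is_derive_prod_seq (fun i => is_derive_bprob_factor (x i) t). Qed.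

Lemma is_derive_bern_exp n (g : hcube n -> R) (t : R) :
  is_derive t 1 (fun s => bern_exp (p_of_t s) g) (inner_exp g (p_of_t t) / 2).
Proof.
have -> : (fun s => bern_exp (p_of_t s) g) =
    fun s => \sum_x ((fun s => bprob (p_of_t s) x) * cst (g x)) s by [].
rewrite /inner_exp mulr_suml.
apply: (is_derive_eq (is_derive_sum_seq _
  (fun x => is_deriveM (is_derive_bprob x t) (is_derive_cst (g x) t 1)))).
by apply: eq_bigr => x _; rewrite -mulr_suml /GRing.scale /=; ring.
Qed.

Lemma inner_expE n (g : hcube n -> R) (p : R) :
  inner_exp g p = bern_exp p (fun x => g x * \sum_(i < n) sgnb (x i)) - n%:R * p * bern_exp p g.
Proof.
rewrite /inner_exp /bern_exp mulr_sumr -sumrB; apply: eq_bigr => x _.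
by rewrite sumrB sumr_const card_ord -mulr_natl; ring.
Qed.

Lemma continuous_inner_exp_p_of_t n (g : hcube n -> R) :
  continuous (fun t : R => inner_exp g (p_of_t t)).
Proof.
move=> t; apply/differentiable_continuous/derivable1_diffP.
have dE h : derivable (fun s => bern_exp (p_of_t s) h) t 1.
  by case: (is_derive_bern_exp h t).
have -> : (fun s => inner_exp g (p_of_t s)) =
    (fun s => bern_exp (p_of_t s) (fun x => g x * \sum_(i < n) sgnb (x i))) -
    (cst n%:R * @p_of_t R) * (fun s => bern_exp (p_of_t s) g).
  by apply/funext => s; rewrite inner_expE.
by apply: derivableB => //; apply: derivableM => //; apply: derivableM.
Qed.

Lemma three_quarters_le_expr n : 3 / 4 <= (5 * n%:R / (5 * n%:R + 1)) ^+ n :> R.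
Proof.
have n_ge0 : 0 <= n%:R :> R by [].
have -> : 5 * n%:R / (5 * n%:R + 1) = 1 + - (5 * n%:R + 1)^-1 :> R.
  by field; rewrite gt_eqF //; lra.
apply: le_trans (bernoulli_ineq _ _); last by rewrite lerNl opprK invf_le1; lra.
have : n%:R / (5 * n%:R + 1) <= 1 / 4 :> R by rewrite ler_pdivrMr; lra.
rewrite mulrN; lra.
Qed.

Lemma integral_inner_exp_p_of_t n (g : hcube n -> R) (a b : R) : a < b ->
  (\int[lebesgue_measure]_(t in `[a, b]%classic) (inner_exp g (p_of_t t))%:E =
   (2 * (bern_exp (p_of_t b) g - bern_exp (p_of_t a) g))%:E)%E.
Proof.
move=> ab; rewrite mulrBr.
apply: (integral_is_derive (F := fun s => 2 * bern_exp (p_of_t s) g)) => // [t|].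
  2: exact: continuous_inner_exp_p_of_t.
have -> : (fun s => 2 * bern_exp (p_of_t s) g) =
    cst 2 * (fun s => bern_exp (p_of_t s) g) by [].
apply: (is_derive_eq (is_deriveM (is_derive_cst (2 : R) t 1) (is_derive_bern_exp g t))).
by rewrite /GRing.scale /=; field.
Qed.

End BiasedCube.

Theorem lemma4p2 (R : realType) (n : nat) (f : hcube n -> R)
  (hf : forall x, -1 <= f x <= 1)
  (h1 : f [ffun => true] = 1)
  (hm1 : f [ffun => false] = -1) :
  (((ln (5 * n%:R : R))^-1)%:E <= rho_exp (ln (5 * n%:R)) (inner_exp f))%E.
Proof.
have n_gt0 : (0 < n)%N.
  case: n f hf h1 hm1 => // f _ h1 hm1.
  have : [ffun => true] = [ffun => false] :> hcube 0 by apply/ffunP => -[].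
  by move/(congr1 f); rewrite h1 hm1 => ?; exfalso; lra.
have N_gt1 : 1 < 5 * n%:R :> R.
  have : 1 <= n%:R :> R by rewrite ler1n.
  lra.
set L := ln (5 * n%:R : R); have L_gt0 : 0 < L by exact: ln_gt0.
have f_ge x : -1 <= f x by case/andP: (hf x).
have f_le x : f x <= 1 by case/andP: (hf x).
set q := (1 + p_of_t L) / 2.
have q_ge : 3 / 4 <= q ^+ n by rewrite /q p_of_t_ln; [exact: three_quarters_le_expr | lra].
have E_hi : 2 * q ^+ n - 1 <= bern_exp (p_of_t L) f.
  have := bern_exp_ge_atom (p_of_t_itv L) f_ge h1.
  by rewrite bprob_cst /sgnb /= mulr1 -/q.
have E_lo : bern_exp (p_of_t (- L)) f <= 1 - 2 * q ^+ n.
  have := bern_exp_le_atom (p_of_t_itv (- L)) f_le hm1.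
  by rewrite bprob_cst p_of_tN /sgnb /= mulrN1 opprK -/q.
rewrite /rho_exp integral_inner_exp_p_of_t -?EFinM ?lee_fin; last lra.
have -> : (2 * L)^-1 * (2 * (bern_exp (p_of_t L) f - bern_exp (p_of_t (- L)) f)) =
    (bern_exp (p_of_t L) f - bern_exp (p_of_t (- L)) f) / L.
  by field; rewrite gt_eqF.
by rewrite ler_pdivlMr // mulVf ?gt_eqF //; lra.
Qed.
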